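(* Let $K$ be a positive integer, let $J$ be a positive integer or $\infty$, and write $[J]=\{1,\dots,J\}$ (with $[J]=\mathbb{Z}_+$ if $J=\infty$). Let $Q=[Q_1,\dots,Q_K]$ with $Q_k:[J]\to\{0,1\}$ and $A=[A_1,\dots,A_K]$ with $A_k:[J]\to\mathbb{R}$, and assume: (2) for every $S\subset\{1,\dots,K\}$ with $\mathcal{R}(S)$ non-empty, the columns of $A_{[\mathcal{R}(S),S]}$ are linearly independent; and (3) for every $l$, $A_l(j)=0$ whenever $Q_l(j)=0$. Suppose $k'$ masks $k\neq k'$, and let $\epsilon\in\mathbb{R}$. Then the matrix $\widetilde A=[A_1,\dots,A_{k-1},A_k+\epsilon A_{k'},A_{k+1},\dots,A_K]$ also satisfies conditions (2) and (3) (with the same $Q$).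
   Context: $\operatorname{supp}(Q_l)=\{j: Q_l(j)=1\}$. For $S\subset\{1,\dots,K\}$, $\mathcal{R}(S)\subset[J]$ is the set of indices $j$ such that $Q_l(j)=1$ for all $l\in S$ and $Q_l(j)=0$ for all $l\notin S$. $A_{[\mathcal{R},S]}$ denotes the submatrix of $A$ with rows in $\mathcal{R}$ and columns in $S$. We say $k'$ masks $k$ if $\operatorname{supp}(Q_{k'})\subset\operatorname{supp}(Q_k)$. *)

From HB Require Import structures.
From mathcomp Require Import all_boot all_order all_algebra.
From mathcomp Require Export reals.
Set Implicit Arguments. Unset Strict Implicit. Unset Printing Implicit Defensive.
Import Order.TTheory GRing.Theory Num.Theory.
Local Open Scope ring_scope.

(* Rows: J : option nat, with None standing for J = infinity.
   The row index set [J] = {1,...,J} (or Z_+ if J = infinity), as a predicate on nat. *)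
Definition in_rows (J : option nat) (j : nat) : bool :=
  (0 < j)%N && (if J is Some n then (j <= n)%N else true).

(* Columns are indexed by 'I_K (l : 'I_K stands for the column l+1).
   Q l j and A l j are the j-th entries of Q_l and A_l. *)

Definition rowsR (K : nat) (J : option nat) (Q : 'I_K -> nat -> bool)
  (S : {set 'I_K}) (j : nat) : bool :=
  in_rows J j && [forall l, Q l j == (l \in S)].

Definition cond2 (R : realType) (K : nat) (J : option nat)
  (Q : 'I_K -> nat -> bool) (A : 'I_K -> nat -> R) : Prop :=
  forall S : {set 'I_K}, (exists j, rowsR J Q S j) ->
    forall c : 'I_K -> R,
      (forall j, rowsR J Q S j -> \sum_(l in S) c l * A l j = 0) ->
      forall l, l \in S -> c l = 0.

Definition cond3 (R : realType) (K : nat) (J : option nat)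
  (Q : 'I_K -> nat -> bool) (A : 'I_K -> nat -> R) : Prop :=
  forall (l : 'I_K) (j : nat), in_rows J j -> Q l j = false -> A l j = 0.

Definition masks (K : nat) (J : option nat) (Q : 'I_K -> nat -> bool)
  (k' k : 'I_K) : Prop :=
  forall j, in_rows J j -> Q k' j -> Q k j.

Definition Atilde (R : realType) (K : nat) (A : 'I_K -> nat -> R)
  (k k' : 'I_K) (eps : R) : 'I_K -> nat -> R :=
  fun l j => if l == k then A k j + eps * A k' j else A l j.

From mathcomp Require Import all_boot all_order all_algebra reals.
Set Implicit Arguments. Unset Strict Implicit. Unset Printing Implicit Defensive.
Import Order.TTheory GRing.Theory Num.Theory.
Local Open Scope ring_scope.

(* The column operation A_k += eps A_{k'} is undone on coefficients by
   c_{k'} += eps c_k.  On a row block R(S) with k in S this turns a vanishing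
   combination of the new columns into one of the old columns; if k' is not in S,
   the column A_{k'} vanishes on R(S) by condition (3), so nothing changes there.
   Condition (3) survives because k' masks k: where Q_k is 0, so is Q_{k'}. *)

Lemma big_in_delta (V : nmodType) (I : finType) (S : {pred I}) (i : I) (x : V) :
  \sum_(l in S) (if l == i then x else 0) = if i \in S then x else 0.
Proof.
case: ifP => iS; last by apply: big1 => l lS; case: eqP => // li; rewrite -li lS in iS.
by rewrite (bigD1 i) //= eqxx big1 ?addr0 // => l /andP[_ /negbTE->].
Qed.

Section ColumnOperation.

Variables (R : realType) (K : nat) (J : option nat).
Variables (Q : 'I_K -> nat -> bool) (A : 'I_K -> nat -> R).
Variables (k k' : 'I_K) (eps : R).

Lemma cond3_rowsR_notin (S : {set 'I_K}) (l : 'I_K) (j : nat) :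
  cond3 J Q A -> rowsR J Q S j -> l \notin S -> A l j = 0.
Proof.
move=> H3 /andP[Jj /forallP /(_ l) /eqP Qlj] lS.
by apply: H3 => //; rewrite Qlj (negbTE lS).
Qed.

Lemma Atilde_neq (l : 'I_K) (j : nat) : l != k -> Atilde A k k' eps l j = A l j.
Proof. by rewrite /Atilde => /negbTE->. Qed.

Lemma sum_Atilde_shift (S : {set 'I_K}) (c : 'I_K -> R) (j : nat) :
  cond3 J Q A -> rowsR J Q S j -> k \in S ->
  \sum_(l in S) c l * Atilde A k k' eps l j
    = \sum_(l in S) (c l + (if l == k' then c k * eps else 0)) * A l j.
Proof.
move=> H3 Sj kS.
have -> : \sum_(l in S) c l * Atilde A k k' eps l j
    = \sum_(l in S) (c l * A l j + (if l == k then c k * (eps * A k' j) else 0)).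
  apply: eq_bigr => l _; rewrite /Atilde.
  by case: eqP => [->|_]; rewrite ?mulrDr ?addr0.
have -> : \sum_(l in S) (c l + (if l == k' then c k * eps else 0)) * A l j
    = \sum_(l in S) (c l * A l j + (if l == k' then c k * eps * A k' j else 0)).
  apply: eq_bigr => l _.
  by case: eqP => [->|_]; rewrite ?mulrDl ?mul0r ?addr0.
rewrite !big_split /= !big_in_delta kS mulrA; congr (_ + _).
by case: ifP => // /negbT k'S; rewrite (cond3_rowsR_notin H3 Sj k'S) mulr0.
Qed.

Lemma cond3_Atilde : masks J Q k' k -> cond3 J Q A -> cond3 J Q (Atilde A k k' eps).
Proof.
move=> Hmask H3 l j Jj Qlj; rewrite /Atilde; case: eqP => [El|_]; last exact: H3.
have Qkj : Q k j = false by rewrite -El.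
have Qk'j : Q k' j = false by apply: contraFF Qkj; apply: Hmask.
by rewrite (H3 _ _ Jj Qkj) (H3 _ _ Jj Qk'j) mulr0 addr0.
Qed.

Lemma cond2_Atilde : k != k' -> cond2 J Q A -> cond3 J Q A ->
  cond2 J Q (Atilde A k k' eps).
Proof.
move=> kk' H2 H3 S Sne c Hc.
case kS: (k \in S); last first.
  apply: (H2 S Sne c) => j Sj; rewrite -[RHS](Hc j Sj).
  by apply: eq_bigr => l lS; rewrite Atilde_neq //; apply: contraTneq lS => ->; rewrite kS.
pose d l := c l + (if l == k' then c k * eps else 0).
have d0 : forall l, l \in S -> d l = 0.
  by apply: (H2 S Sne) => j Sj; rewrite -sum_Atilde_shift ?Hc.
have ck0 : c k = 0 by rewrite -(d0 k kS) /d (negbTE kk') addr0.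
by move=> l lS; rewrite -(d0 l lS) /d ck0 mul0r if_same addr0.
Qed.

End ColumnOperation.

Theorem lemma2 (R : realType) (K : nat) (J : option nat)
  (HK : (0 < K)%N) (HJ : forall n, J = Some n -> (0 < n)%N)
  (Q : 'I_K -> nat -> bool) (A : 'I_K -> nat -> R)
  (H2 : cond2 J Q A) (H3 : cond3 J Q A)
  (k k' : 'I_K) (Hkk' : k != k') (Hmask : masks J Q k' k) (eps : R) :
  cond2 J Q (Atilde A k k' eps) /\ cond3 J Q (Atilde A k k' eps).
Proof.
split; [exact: cond2_Atilde | exact: cond3_Atilde].
Qed.
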